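(* Let $K$ be a number field, let $X\subseteq M_d(K)$ be closed in the linear Zariski topology, and let $\mathcal S=\langle X\rangle$. Let $r\ge0$ and let $Y,T\subseteq M_d(K)$ be closed sets such that $X\cup\{B\in\mathcal S:\operatorname{rank}(B)>r\}\subseteq Y$, and set $Y'\coloneqq\overline{(Y\cup T)^{\le 2\binom{d}{r}+3}}$. If there exists $A=A_1\cdots A_n\in\mathcal S\setminus Y'$ with $A_1,\ldots,A_n\in X$ and $\operatorname{rank}(A)\ge r$, then there exist $k<l$ such that the subproduct $A'=A_k\cdots A_l$ is completely pseudo-regular of rank $r$ and not contained in $Y\cup T$.
   Context: The linear Zariski topology on $M_d(K)$ has as closed sets the finite unions of vector subspaces, and $\overline{\,\cdot\,}$ denotes closure in it. $\langle X\rangle$ is the subsemigroup generated by $X$. For $Z\subseteq M_d(K)$ and $n\ge1$, $Z^{\le n}=\{C_1\cdots C_k: k\in[1,n], C_1,\ldots,C_k\in Z\}$. A matrix $C$ is completely pseudo-regular if it lies in a subgroup of the multiplicative semigroup $M_d(K)$ (equivalently $\operatorname{im}C\cap\ker C=0$). *)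

From HB Require Import structures.
From mathcomp Require Import all_boot all_order all_algebra all_field.
Set Implicit Arguments. Unset Strict Implicit. Unset Printing Implicit Defensive.
Import GRing.Theory.
Local Open Scope ring_scope.

Section Defs.
Variables (K : fieldType) (d : nat).

Definition mxset := 'M[K]_d -> Prop.

(* A vector subspace of M_d(K) is encoded (via mxvec) as the row space of a
   matrix V : 'M_(d*d); A belongs to it iff (mxvec A <= V)%MS. *)
Definition in_subspace (V : 'M[K]_(d * d)) (A : 'M[K]_d) : bool :=
  (mxvec A <= V)%MS.

(* linear Zariski topology: closed sets = finite unions of subspaces *)
Definition lz_closed (Z : mxset) : Prop :=
  exists s : seq 'M[K]_(d * d), forall A, Z A <-> has (fun V => in_subspace V A) s.

Definition lz_closure (Z : mxset) : mxset :=
  fun A => forall C : mxset, lz_closed C -> (forall B, Z B -> C B) -> C A.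

Definition mprod (s : seq 'M[K]_d) : 'M[K]_d := foldr (fun A B => A *m B) 1%:M s.

Definition gen_semigroup (X : mxset) : mxset :=
  fun A => exists s : seq 'M[K]_d, [/\ s <> [::], forall B, B \in s -> X B & A = mprod s].

Definition pow_le (Z : mxset) (n : nat) : mxset :=
  fun A => exists s : seq 'M[K]_d,
    [/\ (1 <= size s)%N, (size s <= n)%N, forall B, B \in s -> Z B & A = mprod s].

(* C lies in a subgroup of the multiplicative semigroup M_d(K) *)
Definition compl_pseudo_regular (C : 'M[K]_d) : Prop :=
  exists (H : mxset) (E : 'M[K]_d),
    [/\ H C, H E,
        forall x y, H x -> H y -> H (x *m y),
        forall x, H x -> E *m x = x /\ x *m E = x
      & forall x, H x -> exists y, [/\ H y, x *m y = E & y *m x = E]].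

End Defs.

From HB Require Import structures.
From mathcomp Require Import all_boot all_order all_algebra all_field all_fingroup.
From mathcomp Require Import zify.
From Stdlib Require Import Classical.
Set Implicit Arguments. Unset Strict Implicit. Unset Printing Implicit Defensive.
Import GRing.Theory.
Local Open Scope ring_scope.

(* Call the segment A_(i+1) ... A_j of A = A_1 ... A_n a step if it is a single
   factor or if its square still has rank at least r. Every step lies in Y or T
   unless it is the wanted subproduct: a longer step has rank at least
   rank A >= r, so either its rank exceeds r and it lies in Y, or its rank is r
   and equals the rank of its square, which makes it completely pseudo-regular.
   Jumping greedily to the furthest end of a step and then over one factor
   either writes A as a product of at most 2 C(d,r) steps, contradicting
   A \notin Y', or produces C(d,r) + 1 cut points x_0 < x_1 < ... no two of which
   bound a step. The latter is impossible: choose L, R with L A R an invertible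
   r x r matrix; then det (L A_1...A_(x_t) A_(x_s+1)...A_n R) is a triangular
   matrix in (s, t) with nonzero diagonal, whereas by Cauchy-Binet it factors
   through the C(d,r) maximal minors. *)

Section DetExpand.
Variable K : fieldType.

Definition det_term r d (G : 'M[K]_(r, d)) (F : 'M[K]_(d, r)) (f : {ffun 'I_r -> 'I_d}) : K :=
  (\prod_i G i (f i)) * \det (rowsub f F).

Lemma det_mulmx_expand r d (G : 'M[K]_(r, d)) (F : 'M[K]_(d, r)) :
  \det (G *m F) = \sum_f det_term G F f.
Proof.
transitivity (\sum_(s : 'S_r) \sum_(f : {ffun 'I_r -> 'I_d})
    (-1) ^+ s * ((\prod_i G i (f i)) * \prod_i F (f i) (s i))).
  apply: eq_bigr => s _; rewrite -mulr_sumr; congr (_ * _).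
  rewrite (eq_bigr (fun i => \sum_k G i k * F k (s i))) => [|i _]; last by rewrite mxE.
  by rewrite bigA_distr_bigA; apply: eq_bigr => f _; rewrite big_split.
rewrite exchange_big; apply: eq_bigr => f _.
rewrite /det_term /determinant mulr_sumr; apply: eq_bigr => s _.
by rewrite mulrCA; congr (_ * (_ * _)); apply: eq_bigr => i _; rewrite mxE.
Qed.

End DetExpand.

Section CauchyBinet.
Variables (K : fieldType) (r d : nat).
Implicit Types (G : 'M[K]_(r, d)) (F : 'M[K]_(d, r)) (f : {ffun 'I_r -> 'I_d}).

Lemma det_term_noninj G F f : ~~ injectiveb f -> det_term G F f = 0.
Proof.
case/injectivePn => i1 [i2 ne_i eq_f].
by rewrite /det_term (determinant_alternate ne_i) ?mulr0 // => j; rewrite !mxE eq_f.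
Qed.

Lemma sum_det_term_sets G F :
  \sum_f det_term G F f =
  \sum_(S : {set 'I_d} | #|S| == r)
     \sum_(f : {ffun 'I_r -> 'I_d} | codom f \subset S) det_term G F f.
Proof.
rewrite (exchange_big_dep predT) //=; apply: eq_bigr => f _ /=.
have [inj_f | /det_term_noninj ->] := boolP (injectiveb f); last by rewrite big1.
have card_f : #|[set x in codom f]| = r.
  by rewrite cardsE card_codom ?card_ord //; apply/injectiveP.
rewrite (big_pred1 [set x in codom f]) // => S.
apply/andP/eqP => [[/eqP cardS sub_fS] | ->].
  apply/eqP; rewrite eq_sym eqEcard cardS card_f leqnn andbT.
  by apply/subsetP => x; rewrite inE => /(subsetP sub_fS).
by rewrite card_f; split => //; apply/subsetP => x; rewrite inE.
Qed.

Variable i0 : 'I_d.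

(* [i0] is a dummy default for [nth]: when [#|S| = r] every index is in range. *)
Definition set_enum (S : {set 'I_d}) (j : 'I_r) : 'I_d := nth i0 (enum S) j.

Lemma sum_det_term_subset (S : {set 'I_d}) G F : #|S| = r ->
  \sum_(f : {ffun 'I_r -> 'I_d} | codom f \subset S) det_term G F f
  = \det (colsub (set_enum S) G) * \det (rowsub (set_enum S) F).
Proof.
move=> cardS; set e := set_enum S.
have size_S : size (enum S) = r by rewrite -cardE.
pose idx (f : {ffun 'I_r -> 'I_d}) := [ffun i => insubd i (index (f i) (enum S))].
rewrite (reindex_onto (fun g : {ffun 'I_r -> 'I_r} => [ffun i => e (g i)]) idx) /=; last first.
  move=> f /subsetP sub_fS; apply/ffunP => i; rewrite !ffunE /e /set_enum.
  have fiS : f i \in enum S by rewrite mem_enum; apply/sub_fS/codom_f.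
  by rewrite insubdK ?nth_index // -topredE /= -[X in (_ < X)%N]size_S index_mem.
rewrite -det_mulmx det_mulmx_expand; symmetry; apply: eq_big => [g|g _].
  rewrite andbC; apply/esym/andP; split.
    apply/eqP/ffunP => i; rewrite !ffunE /e /set_enum; apply: val_inj.
    by rewrite /= index_uniq ?enum_uniq ?size_S // insubdK // -topredE /=.
  by apply/subsetP => x /codomP [i ->]; rewrite ffunE /e /set_enum -mem_enum mem_nth ?size_S.
rewrite /det_term; congr (_ * _).
  by apply: eq_bigr => i _; rewrite !mxE ffunE.
by congr (\det _); apply/matrixP => i j; rewrite !mxE ffunE.
Qed.

Theorem Cauchy_Binet G F :
  \det (G *m F) = \sum_(S : {set 'I_d} | #|S| == r)
     \det (colsub (set_enum S) G) * \det (rowsub (set_enum S) F).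
Proof.
rewrite det_mulmx_expand sum_det_term_sets.
by apply: eq_bigr => S /eqP cardS; rewrite sum_det_term_subset.
Qed.
End CauchyBinet.

Section RankBound.
Variables (K : fieldType) (r d : nat).

Lemma triangular_det_family_le p (P : 'I_p -> 'M[K]_(r, d)) (Q : 'I_p -> 'M[K]_(d, r)) :
    (0 < d)%N -> (forall s, \det (P s *m Q s) != 0) ->
    (forall s t : 'I_p, (s < t)%N -> \det (P t *m Q s) = 0) ->
  (p <= 'C(d, r))%N.
Proof.
move=> d_gt0 PQ_neq0 PQ_trig; pose i0 := Ordinal d_gt0.
pose Sr := [set S : {set 'I_d} | #|S| == r].
pose e (k : 'I_#|Sr|) : 'I_r -> 'I_d := set_enum i0 (enum_val k).
pose M := \matrix_(s, t) \det (P t *m Q s).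
have M_factor : M = \matrix_(s, k) \det (rowsub (e k) (Q s))
                     *m \matrix_(k, t) \det (colsub (e k) (P t)).
  apply/matrixP => s t; rewrite !mxE (Cauchy_Binet i0).
  rewrite (eq_bigl (fun S => S \in Sr)); last by move=> S; rewrite inE.
  by rewrite big_enum_val; apply: eq_bigr => k _; rewrite !mxE mulrC.
have M_unit : M \in unitmx.
  rewrite unitmxE unitfE det_trig; last by apply/is_trig_mxP => s t st; rewrite mxE PQ_trig.
  by apply/prodf_neq0 => s _; rewrite mxE.
have card_Sr : #|Sr| = 'C(d, r) by rewrite card_draws card_ord.
rewrite -(mxrank_unit M_unit) M_factor -card_Sr.
exact: leq_trans (mxrankM_maxl _ _) (rank_leq_col _).
Qed.
End RankBound.

Section PseudoRegular.
Variable K : fieldType.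

Lemma det_mxrank_lt n (A : 'M[K]_n) : (\rank A < n)%N -> \det A = 0.
Proof.
move=> rkA; apply/eqP; apply: contraTT rkA => detA_neq0.
by rewrite -leqNgt mxrank_unit // unitmxE unitfE.
Qed.

Lemma unitmx_compress m n r (A : 'M[K]_(m, n)) :
  (r <= \rank A)%N -> exists (L : 'M_(r, m)) (R : 'M_(n, r)), L *m A *m R \in unitmx.
Proof.
move=> rA; have := mulmx_ebase A; set ce := col_ebase A; set re := row_ebase A => eA.
exists (pid_mx r *m invmx ce), (invmx re *m pid_mx r).
rewrite -eA !mulmxA mulmxKV ?col_ebase_unit //.
rewrite -[_ *m re *m _]mulmxA mulmxV ?row_ebase_unit // mulmx1 !mul_pid_mx.
have -> : minn n (minn (minn m (minn r (\rank A))) r) = r.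
  by have := rank_leq_row A; have := rank_leq_col A; lia.
by rewrite pid_mx_1 unitmx1.
Qed.

Variable d : nat.

Lemma compl_pseudo_regular_factor m (F : 'M[K]_(d, m)) (G : 'M[K]_(m, d)) :
  G *m F \in unitmx -> compl_pseudo_regular (F *m G).
Proof.
set M := G *m F => M_unit.
pose sandwich X := F *m X *m G.
have sandwichM X Y : sandwich X *m sandwich Y = sandwich (X *m M *m Y).
  by rewrite /sandwich /M !mulmxA.
have sandwich1 : F *m G = sandwich 1%:M by rewrite /sandwich mulmx1.
clearbody M.
exists (fun Z => exists2 X, X \in unitmx & Z = sandwich X), (sandwich (invmx M)).
rewrite sandwich1; split.
- by exists 1%:M; rewrite ?unitmx1.
- by exists (invmx M); rewrite ?unitmx_inv.
- move=> _ _ [X X_unit ->] [Y Y_unit ->]; rewrite sandwichM.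
  by exists (X *m M *m Y); rewrite // !unitmx_mul X_unit M_unit Y_unit.
- by move=> _ [X _ ->]; rewrite !sandwichM mulVmx // mul1mx mulmxK.
move=> _ [X X_unit ->]; exists (sandwich (invmx M *m invmx X *m invmx M)).
rewrite !sandwichM !mulmxA mulmxK // mulmxV // mul1mx mulmxKV // mulmxKV //; split=> //.
by exists (invmx M *m invmx X *m invmx M); rewrite // !unitmx_mul !unitmx_inv X_unit M_unit.
Qed.

Lemma compl_pseudo_regular_rank (C : 'M[K]_d) :
  \rank (C *m C) = \rank C -> compl_pseudo_regular C.
Proof.
move=> rkCC; have := mulmx_base C.
set cb := col_base C; set rb := row_base C => C_base.
rewrite -C_base; apply: compl_pseudo_regular_factor.
have CC : cb *m (rb *m cb) *m rb = C *m C by rewrite mulmxA -mulmxA C_base.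
rewrite -row_free_unit /row_free -[X in _ == X]rkCC -CC.
by rewrite (mxrankMfree _ (row_base_free C)) (eqmxMfull _ (col_base_full C)).
Qed.
End PseudoRegular.

Lemma mem_pairmap_path (T U : eqType) (e : rel T) (f : T -> T -> U) x s y :
  path e x s -> y \in pairmap f x s -> exists a b, e a b /\ y = f a b.
Proof.
elim: s x => [|z s IH] x //= /andP [exz pzs]; rewrite inE => /predU1P [->|].
  by exists x, z.
exact: IH.
Qed.

Section CoverOrAntichain.
Variables (n : nat) (e : rel nat).
Hypothesis e_succ : forall i, (i < n)%N -> e i i.+1.

Lemma cover_or_antichain p i : (i <= n)%N ->
  (exists c, [/\ path (fun a b => (a < b <= n)%N && e a b) i c, last i c = n
               & (size c <= p.*2)%N])
  \/ (exists x, [/\ size x = p, pairwise (fun a b => (a < b)%N && ~~ e a b) (i :: x)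
                  & all (fun a => a <= n)%N x]).
Proof.
elim: p i => [|p IH] i le_in; first by right; exists [::].
have [-> | lt_in] := eqVneq i n; first by left; exists [::].
have {}lt_in : (i < n)%N by rewrite ltn_neqAle lt_in.
have ex_j : exists j, (i < j <= n)%N && e i j by exists i.+1; rewrite ltnSn lt_in e_succ.
have ub_j j : (i < j <= n)%N && e i j -> (j <= n)%N by case/andP => /andP [].
have [j /andP [ij eij] j_max] := ex_maxnP ex_j ub_j.
have gap_i y : (j < y <= n)%N -> (i < y)%N && ~~ e i y.
  case/andP => jy yn; have iy := ltn_trans (proj1 (andP ij)) jy; rewrite iy.
  by apply: contraL jy => eiy; rewrite -leqNgt j_max // iy yn.
have [jn | lt_jn] := eqVneq j n.
  by left; exists [:: n]; rewrite /= -jn in ij eij *; rewrite ij eij.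
have {}lt_jn : (j < n)%N by rewrite ltn_neqAle lt_jn; case/andP: ij.
have [[c [path_c last_c size_c]] | [x [size_x gap_x x_le_n]]] := IH j.+1 lt_jn.
  by left; exists [:: j, j.+1 & c]; split => //=; rewrite ij eij ltnSn lt_jn e_succ.
right; exists (j.+1 :: x); split => //=; first by rewrite size_x.
  rewrite gap_i ?ltnSn ?lt_jn //=; apply/andP; split => //.
  apply/allP => y yx; apply: gap_i; rewrite (allP x_le_n) // andbT.
  by case/andP: gap_x => /allP /(_ y yx) /andP [/ltnW].
by rewrite lt_jn.
Qed.
End CoverOrAntichain.

Section Subproducts.
Variables (K : fieldType) (d : nat).
Implicit Types s : seq 'M[K]_d.

Lemma mprod_cat s1 s2 : mprod (s1 ++ s2) = mprod s1 *m mprod s2.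
Proof. by elim: s1 => [|A s1 IH] /=; rewrite ?mul1mx // IH mulmxA. Qed.

Variable As : seq 'M[K]_d.
Local Notation n := (size As).

Definition subprod i j := mprod (drop i (take j As)).

Lemma subprod_split i j k : (i <= j <= k)%N -> subprod i k = subprod i j *m subprod j k.
Proof.
case/andP => ij jk; rewrite /subprod -mprod_cat.
have drop_take a b : (a <= b)%N -> drop a (take b As) = take (b - a) (drop a As).
  by move=> ab; rewrite take_drop subnK.
rewrite !drop_take ?(leq_trans ij jk) //.
have -> : drop j As = drop (j - i) (drop i As) by rewrite drop_drop subnK.
by rewrite -takeD; congr (mprod (take _ _)); lia.
Qed.

Lemma subprod0n : subprod 0 n = mprod As.
Proof. by rewrite /subprod drop0 take_size. Qed.

Lemma subprod_nn i : subprod i i = 1%:M.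
Proof. by rewrite /subprod drop_oversize // size_take_min geq_minl. Qed.

Lemma subprod_succ i : (i < n)%N -> subprod i i.+1 = nth 0 As i.
Proof.
move=> lt_in; rewrite /subprod (drop_nth 0) ?size_takel //.
by rewrite drop_oversize ?size_takel //= nth_take // mulmx1.
Qed.

Lemma subprod_gen_semigroup (X : mxset K d) i j :
  (forall B, B \in As -> X B) -> (i < j <= n)%N -> gen_semigroup X (subprod i j).
Proof.
move=> AsX /andP [ij jn]; exists (drop i (take j As)); split => //.
  by move/(congr1 size); rewrite size_drop size_takel //=; lia.
by move=> B /mem_drop /mem_take /AsX.
Qed.

Lemma mxrank_subprod i j : (i <= j)%N -> (j <= n)%N ->
  (\rank (mprod As) <= \rank (subprod i j))%N.
Proof.
move=> ij jn; rewrite -subprod0n (@subprod_split 0 i) ?(leq_trans ij) //.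
rewrite (@subprod_split i j) ?ij //.
exact: leq_trans (mxrankM_maxr _ _) (mxrankM_maxl _ _).
Qed.

Lemma mprod_pairmap_subprod i c :
  path leq i c -> mprod (pairmap subprod i c) = subprod i (last i c).
Proof.
elim: c i => [|j c IH] i /=; first by rewrite subprod_nn.
case/andP => ij path_c; rewrite IH // -subprod_split // ij /=.
have := mem_last j c; rewrite inE => /predU1P [-> //|].
exact: (allP (order_path_min leq_trans path_c)).
Qed.
End Subproducts.

Section Steps.
Variables (K : fieldType) (d : nat) (As : seq 'M[K]_d) (r : nat).
Local Notation n := (size As).
Local Notation P := (subprod As).
Hypothesis rank_As : (r <= \rank (mprod As))%N.

Lemma antichain_size_le x :
    pairwise (fun a b => (a < b)%N && (\rank (P a b *m P a b) < r)%N) x ->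
    all (fun a => a <= n)%N x ->
  (size x <= 'C(d, r))%N.
Proof.
move=> drop_x x_le_n; have [r0 | r_gt0] := posnP r.
  by move: drop_x; rewrite r0 bin0; case: x {x_le_n} => [|a [|b x]] //=; rewrite ltn0 andbF.
have d_gt0 : (0 < d)%N := leq_trans r_gt0 (leq_trans rank_As (rank_leq_row _)).
have [L [R LAR_unit]] := unitmx_compress rank_As.
pose y (s : 'I_(size x)) := nth 0%N x s.
have y_le_n s : (y s <= n)%N by apply: (all_nthP 0%N x_le_n).
apply: (@triangular_det_family_le _ r d _ (fun t => L *m P 0 (y t)) (fun s => P (y s) n *m R))
  => // [s|s t st].
  rewrite mulmxA -[L *m _ *m _]mulmxA -subprod_split ?y_le_n // subprod0n.
  by move: LAR_unit; rewrite unitmxE unitfE.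
have /andP [yst drop_st] :
    (y s < y t)%N && (\rank (P (y s) (y t) *m P (y s) (y t)) < r)%N.
  by apply: (pairwiseP 0%N drop_x) => //; rewrite inE ltn_ord.
rewrite (@subprod_split _ _ _ 0 (y s)) ?(ltnW yst) //.
rewrite (@subprod_split _ _ _ (y s) (y t) n) ?y_le_n ?(ltnW yst) //.
have -> : L *m (P 0 (y s) *m P (y s) (y t)) *m (P (y s) (y t) *m P (y t) n *m R)
        = L *m P 0 (y s) *m (P (y s) (y t) *m P (y s) (y t)) *m (P (y t) n *m R).
  by rewrite !mulmxA.
apply: det_mxrank_lt; apply: leq_ltn_trans drop_st.
exact: leq_trans (mxrankM_maxl _ _) (mxrankM_maxr _ _).
Qed.

Definition cover_step i j := (j == i.+1) || (r <= \rank (P i j *m P i j))%N.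

Lemma cover_step_succ i : cover_step i i.+1.
Proof. by rewrite /cover_step eqxx. Qed.

Lemma cover_stepP i j : (i < j <= n)%N -> cover_step i j ->
  [\/ j = i.+1, (r < \rank (P i j))%N
    | [/\ (i.+1 < j)%N, \rank (P i j) = r & compl_pseudo_regular (P i j)]].
Proof.
case/andP=> ij jn step; have rk_ij := leq_trans rank_As (mxrank_subprod (ltnW ij) jn).
have [-> | ne_j] := eqVneq j i.+1; first exact: Or31.
have [lt_rk|le_rk] := ltnP r (\rank (P i j)); first exact: Or32.
have rk_P : \rank (P i j) = r by apply/eqP; rewrite eqn_leq le_rk.
apply: Or33; split => //; first by rewrite ltn_neqAle eq_sym ne_j.
apply: compl_pseudo_regular_rank; apply/eqP; rewrite eqn_leq mxrankM_maxl rk_P.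
by move: step; rewrite /cover_step (negbTE ne_j).
Qed.
End Steps.

Theorem lemmaV15 (K : fieldExtType rat) (d : nat) (X Y T : 'M[K]_d -> Prop) (r : nat)
    (As : seq 'M[K]_d) :
  lz_closed X -> lz_closed Y -> lz_closed T ->
  (forall B, X B -> Y B) ->
  (forall B, gen_semigroup X B -> (r < \rank B)%N -> Y B) ->
  As <> [::] -> (forall B, B \in As -> X B) ->
  ~ lz_closure (pow_le (fun B => Y B \/ T B) (2 * 'C(d, r) + 3)) (mprod As) ->
  (r <= \rank (mprod As))%N ->
  exists k l : nat,
    [/\ (k < l)%N, (l < size As)%N,
        compl_pseudo_regular (mprod (drop k (take l.+1 As))),
        \rank (mprod (drop k (take l.+1 As))) = r
      & ~ (Y (mprod (drop k (take l.+1 As))) \/ T (mprod (drop k (take l.+1 As))))].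
Proof.
move=> _ _ _ XY semigroupY As_neq0 AsX notcl rank_As; apply: NNPP => no_witness.
have n_gt0 : (0 < size As)%N by rewrite lt0n size_eq0; apply/eqP.
have step_YT a b : (a < b <= size As)%N -> cover_step As r a b ->
    Y (subprod As a b) \/ T (subprod As a b).
  move=> abn step; have /andP [ab bn] := abn.
  case: (cover_stepP rank_As abn step) => [b_succ|rk_gt|[ab1 rk_eq cpr]].
  - have lt_an : (a < size As)%N by rewrite -b_succ.
    by left; rewrite b_succ subprod_succ //; apply/XY/AsX/mem_nth.
  - by left; apply: semigroupY rk_gt; apply: subprod_gen_semigroup.
  apply: NNPP => notYT; apply: no_witness; exists a, b.-1.
  by rewrite prednK; last lia; split => //; lia.
have [[c [path_c last_c size_c]] | [x [size_x gap_x x_le_n]]] :=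
  cover_or_antichain (fun i _ => cover_step_succ As r i) 'C(d, r) (leq0n (size As)).
  apply: notcl => Z _ pow_Z; apply: pow_Z; exists (pairmap (subprod As) 0 c).
  rewrite size_pairmap mprod_pairmap_subprod ?last_c ?subprod0n; last first.
    by apply: sub_path path_c => a b /andP [/andP [/ltnW]].
  split => //; [by case: c last_c {path_c size_c} => //=; lia | lia |].
  by move=> B /(mem_pairmap_path path_c) [a [b [/andP [abn step] ->]]]; apply: step_YT.
have gap_drop a b : (a < b)%N && ~~ cover_step As r a b ->
    (a < b)%N && (\rank (subprod As a b *m subprod As a b) < r)%N.
  by case/andP => -> /norP [_]; rewrite -ltnNge.
have := antichain_size_le rank_As (sub_pairwise gap_drop gap_x).
by rewrite /= x_le_n size_x ltnn => /(_ isT).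
Qed.
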